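(* Assume $S^t(\mu,\nu)>0$ and let $X$ be $F^t$ conditioned on $F^t_{t+1}=r$. Then $$D(X_0\|F^t_0)+D(X_{-1}\mid X_0\,\|\,B^t_{-1}\mid B^t_0)\ \ge\ -\log\|\mu\|_2^2,$$ $$D(X_t\|B^t_t)+D(X_{t+1}\mid X_t\,\|\,F^t_{t+1}\mid F^t_t)\ \ge\ -\log\|\nu\|_2^2 .$$
   Context: $\Omega$ is a finite set, $S$ a symmetric substochastic matrix on $\Omega$ with nonnegative entries, $u,v$ nonnegative vectors with $\|u\|_2=\|v\|_2=1$, $\mu=u/\|u\|_1$, $\nu=v/\|v\|_1$, $t$ a positive integer, $S^t(\mu,\nu)=\sum_{x,y}\mu(x)S^t(x,y)\nu(y)$. Let $\Omega_\circ=\Omega\cup\{r\}$, $r\notin\Omega$, fix $z_0\in\Omega$. $F^t$ is the sub-probability walk on $\Omega_\circ$ at times $-1,\ldots,t+1$ with $\Pr[F^t=w]=\mu(w_0)\prod_{i=1}^tS(w_{i-1},w_i)\,c(w)$ for $w_{-1}=r$, $w_0,\ldots,w_t\in\Omega$, where $c(w)=\nu(w_t)$ if $w_{t+1}=r$, $1-\nu(w_t)$ if $w_{t+1}=z_0$, 0 otherwise. $B^t$ has $\Pr[B^t=w]=\nu(w_t)\prod_{i=1}^tS(w_i,w_{i-1})\,c'(w)$ for $w_{t+1}=r$, $w_0,\ldots,w_t\in\Omega$, with $c'(w)=\mu(w_0)$ if $w_{-1}=r$, $1-\mu(w_0)$ if $w_{-1}=z_0$, 0 otherwise. $X$ has $\Pr[X=w]=\Pr[F^t=w]/S^t(\mu,\nu)$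 for $w_{t+1}=r$. Divergence $D(p\|q)=\sum_xp(x)\log\frac{p(x)}{q(x)}$ (terms with $p(x)=0$ are 0, log base 2), applied to distribution functions of random variables; conditional divergence $D(A_1\mid A_2\,\|\,B_1\mid B_2)=\sum_a\Pr[A_2=a]\,D(\operatorname{dist}(A_1\mid A_2=a)\,\|\,\operatorname{dist}(B_1\mid B_2=a))$ with $\operatorname{dist}(B_1\mid B_2=a)(b)=\Pr[B_1=b,B_2=a]/\Pr[B_2=a]$. *)

From HB Require Import structures.
From mathcomp Require Import all_boot all_order all_algebra.
From mathcomp Require Import all_classical all_reals exp.
Set Implicit Arguments. Unset Strict Implicit. Unset Printing Implicit Defensive.
Import Order.TTheory GRing.Theory Num.Theory.
Local Open Scope ring_scope.

Section Defs.
Variable R : realType.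
Variable Omega : finType.

Definition log2 (x : R) : R := ln x / ln 2.

Fixpoint Spow (S : Omega -> Omega -> R) (n : nat) (x y : Omega) : R :=
  match n with
  | 0 => (x == y)%:R
  | n'.+1 => \sum_(z : Omega) Spow S n' x z * S z y
  end.

Definition l1normalize (u : Omega -> R) (x : Omega) : R :=
  u x / \sum_(y : Omega) `|u y|.

Definition Sbil (S : Omega -> Omega -> R) (t : nat) (mu nu : Omega -> R) : R :=
  \sum_(x : Omega) \sum_(y : Omega) mu x * Spow S t x y * nu y.

(* Omega_o = option Omega, with None playing the role of the extra point r.
   A walk at times -1, 0, ..., t+1 is w : 'I_(t+3) -> option Omega,
   where time k is stored at index k+1. *)
Definition walk (t : nat) := {ffun 'I_(t.+3) -> option Omega}.

(* the entry at index j (i.e. time j-1) *)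
Definition wat (t : nat) (w : walk t) (j : nat) : option Omega := w (inord j).

Definition inner_ok (t : nat) (w : walk t) : bool :=
  [forall j : 'I_(t.+3), ((1 <= j) && (j <= t.+1))%N ==> (w j != None)].

(* value (in Omega) at index j, meaningful when inner_ok *)
Definition wv (z0 : Omega) (t : nat) (w : walk t) (j : nat) : Omega :=
  odflt z0 (wat w j).

Definition PF (S : Omega -> Omega -> R) (mu nu : Omega -> R) (z0 : Omega)
    (t : nat) (w : walk t) : R :=
  if (wat w 0 == None) && inner_ok w then
    mu (wv z0 w 1) * (\prod_(1 <= i < t.+1) S (wv z0 w i) (wv z0 w i.+1)) *
    (if wat w t.+2 == None then nu (wv z0 w t.+1)
     else if wat w t.+2 == Some z0 then 1 - nu (wv z0 w t.+1) else 0)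
  else 0.

Definition PB (S : Omega -> Omega -> R) (mu nu : Omega -> R) (z0 : Omega)
    (t : nat) (w : walk t) : R :=
  if (wat w t.+2 == None) && inner_ok w then
    nu (wv z0 w t.+1) * (\prod_(1 <= i < t.+1) S (wv z0 w i.+1) (wv z0 w i)) *
    (if wat w 0 == None then mu (wv z0 w 1)
     else if wat w 0 == Some z0 then 1 - mu (wv z0 w 1) else 0)
  else 0.

(* Pr[X = w] : F^t conditioned on F^t_{t+1} = r *)
Definition PX (S : Omega -> Omega -> R) (mu nu : Omega -> R) (z0 : Omega)
    (t : nat) (w : walk t) : R :=
  if wat w t.+2 == None then PF S mu nu z0 w / Sbil S t mu nu else 0.

Definition marg (t : nat) (P : walk t -> R) (j : nat) (a : option Omega) : R :=
  \sum_(w : walk t | wat w j == a) P w.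

Definition joint (t : nat) (P : walk t -> R) (i j : nat) (b a : option Omega) : R :=
  \sum_(w : walk t | (wat w i == b) && (wat w j == a)) P w.

Local Open Scope ereal_scope.

Definition Dkl (T : finType) (p q : T -> R) : \bar R :=
  \sum_(x : T | (0 < p x)%R)
     (if (0 < q x)%R then ((p x * log2 (p x / q x))%R)%:E else +oo).

Definition condD (t : nat) (PA PQ : walk t -> R) (i j : nat) : \bar R :=
  \sum_(a : option Omega | (0 < marg PA j a)%R)
    (marg PA j a)%:E *
    Dkl (fun b => joint PA i j b a / marg PA j a)%R
        (fun b => joint PQ i j b a / marg PQ j a)%R.

End Defs.

From HB Require Import structures.
From mathcomp Require Import all_boot all_order all_algebra.
From mathcomp Require Import all_classical all_reals exp.
From mathcomp Require Import ring lra zify.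
Set Implicit Arguments. Unset Strict Implicit. Unset Printing Implicit Defensive.
Import Order.TTheory GRing.Theory Num.Theory.
Local Open Scope ring_scope.

(* X_{-1} = r surely, while B_{-1} = r given B_0 = x has probability mu(x); so the conditional
   term is E[-log mu(X_0)].  With p and q the laws of X_0 and F_0, the left-hand side becomes
   E[log (p(X_0) / (q(X_0) mu(X_0)))] >= -log sum_x q(x) mu(x) by Gibbs' inequality, and
   q <= mu because S is substochastic, which gives -log ||mu||_2^2.  Reversing time maps X to itself and exchanges F^t
   with B^t and mu with nu, as S is symmetric; so the second inequality is the first one for
   the reversed walk. *)

Lemma big_option (V : nmodType) (T : finType) (F : option T -> V) :
  \sum_(a : option T) F a = F None + \sum_(x : T) F (Some x).
Proof.
rewrite (bigD1 None) //=; congr (_ + _).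
rewrite (reindex_omap Some id) //=; last by move=> [x|].
by apply: eq_bigl => x; rewrite eqxx.
Qed.

Lemma sum_delta (R : pzSemiRingType) (T : finType) (x : T) (F : T -> R) :
  \sum_y (x == y)%:R * F y = F x.
Proof.
rewrite (bigD1 x) //= eqxx mul1r big1 ?addr0 // => y /negbTE.
by rewrite eq_sym => ->; rewrite mul0r.
Qed.

Lemma sum_eq1_exists_gt0 (R : realDomainType) (I : finType) (p : I -> R) :
  \sum_a p a = 1 -> exists a, 0 < p a.
Proof.
move=> p1; apply/existsP; apply: contraT; rewrite negb_exists => /forallP p_le0.
suff : \sum_a p a <= 0 by rewrite p1 ler10.
by apply: sumr_le0 => a _; rewrite leNgt p_le0.
Qed.

Section Log2.
Variable R : realType.
Implicit Types x y : R.

Lemma log2M x y : 0 < x -> 0 < y -> log2 (x * y) = log2 x + log2 y.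
Proof. by move=> x0 y0; rewrite /log2 lnM ?posrE // mulrDl. Qed.

Lemma log2_div x y : 0 < x -> 0 < y -> log2 (x / y) = log2 x - log2 y.
Proof. by move=> x0 y0; rewrite /log2 ln_div ?posrE // mulrBl. Qed.

Lemma log2V x : 0 < x -> log2 x^-1 = - log2 x.
Proof. by move=> x0; rewrite /log2 lnV ?posrE // mulNr. Qed.

Lemma ler_log2 x y : 0 < x -> x <= y -> log2 x <= log2 y.
Proof.
move=> x0 xy; rewrite /log2 ler_pM2r ?invr_gt0; last by apply: ln_gt0; lra.
by rewrite ler_ln ?posrE // (lt_le_trans x0).
Qed.

Lemma ln_le_subr1 x : 0 < x -> ln x <= x - 1.
Proof. by move=> x0; have := @le_ln1Dx R (x - 1); rewrite addrCA subrr addr0; apply; lra. Qed.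

Lemma gibbs (I : finType) (p r : I -> R) :
  (forall a, 0 <= p a) -> \sum_a p a = 1 -> (forall a, 0 < p a -> 0 < r a) ->
  - log2 (\sum_(a | 0 < p a) r a) <= \sum_(a | 0 < p a) p a * log2 (p a / r a).
Proof.
move=> p0 p1 r0.
have p1' : \sum_(a | 0 < p a) p a = 1.
  rewrite -p1 [RHS](bigID (fun a => 0 < p a)) /= [X in _ = _ + X]big1 ?addr0 //.
  by move=> a; have := p0 a; lra.
have [a0 pa0] := sum_eq1_exists_gt0 p1.
set A := \sum_(a | 0 < p a) r a.
have A0 : 0 < A.
  rewrite /A (bigD1 a0) //=; apply: ltr_pwDl; first exact: r0.
  by apply: sumr_ge0 => a /andP[/r0/ltW].
have termwise a : 0 < p a -> p a - r a / A <= p a * ln (p a / r a) + p a * ln A.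
  move=> pa; have ra := r0 a pa.
  have y0 : 0 < r a / (p a * A) by rewrite divr_gt0 ?mulr_gt0.
  rewrite -mulrDr -lnM ?posrE ?divr_gt0 //.
  have -> : p a / r a * A = (r a / (p a * A))^-1.
    by rewrite invfM invrK; field; rewrite !gt_eqF.
  have -> : p a - r a / A = p a * (1 - r a / (p a * A)).
    by field; rewrite !gt_eqF.
  by rewrite lnV ?posrE // ler_pM2l //; have := ln_le_subr1 y0; lra.
have sum_ge0 : 0 <= \sum_(a | 0 < p a) (p a * ln (p a / r a) + p a * ln A).
  apply: le_trans (ler_sum _ termwise).
  by rewrite sumrB p1' -mulr_suml -/A divff ?subrr // gt_eqF.
have ln2 : 0 < ln (2 : R) by apply: ln_gt0; lra.
rewrite /log2; under eq_bigr => a _ do rewrite mulrA.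
rewrite -mulr_suml -mulNr ler_pM2r ?invr_gt0 //.
by move: sum_ge0; rewrite big_split /= -mulr_suml p1' mul1r; lra.
Qed.

Lemma DklE (T : finType) (p q : T -> R) : (forall a, 0 < p a -> 0 < q a) ->
  Dkl p q = (\sum_(a | 0 < p a) p a * log2 (p a / q a))%:E.
Proof. by move=> q0; rewrite /Dkl -sumEFin; apply: eq_bigr => a /q0 ->. Qed.

Lemma Dkl_indicator (T : finType) (a0 : T) (q : T -> R) : 0 < q a0 ->
  Dkl (fun a => (a == a0)%:R) q = (- log2 (q a0))%:E.
Proof.
move=> q0; rewrite DklE => [|a]; last by case: eqP => [-> | _]; rewrite ?ltxx.
rewrite (bigD1 a0) ?eqxx ?ltr01 //= big1 => [|a /andP[_ /negbTE ->]]; last by rewrite mul0r.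
by rewrite addr0 mul1r div1r log2V.
Qed.

End Log2.

Section Walks.
Variables (R : realType) (Omega : finType) (t : nat).
Local Notation W := (walk Omega t).
Implicit Types (w : W) (P Q : W -> R).

Definition set_walk w (j : 'I_t.+3) (y : option Omega) : W :=
  [ffun i => if i == j then y else w i].

Lemma sum_set_walk (F : W -> R) j c :
  \sum_(w : W) F w = \sum_(w : W | w j == c) \sum_y F (set_walk w j y).
Proof.
rewrite (partition_big (fun w : W => w j) predT) //= exchange_big /=.
apply: eq_bigr => y _.
rewrite (reindex_onto (fun w => set_walk w j y) (fun w => set_walk w j c)) /=.
  apply: eq_bigl => w; rewrite /set_walk ffunE !eqxx /=.
  apply/eqP/eqP => [<-|wc]; first by rewrite ffunE eqxx.
  by apply/ffunP => i; rewrite !ffunE; case: eqP => // ->; rewrite wc.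
by move=> w /eqP wy; apply/ffunP => i; rewrite !ffunE; case: eqP => // ->.
Qed.

Lemma inord_eq (i j : nat) : (i <= t.+2)%N -> (j <= t.+2)%N ->
  ((inord i : 'I_t.+3) == inord j) = (i == j).
Proof.
move=> hi hj; apply/eqP/eqP => [h|->] //.
by have := congr1 val h; rewrite /= !inordK.
Qed.

Lemma wat_set_walk w i j y : (i <= t.+2)%N -> (j <= t.+2)%N ->
  wat (set_walk w (inord j) y) i = if i == j then y else wat w i.
Proof. by move=> hi hj; rewrite /wat /set_walk ffunE inord_eq. Qed.

Lemma inner_okP w :
  reflect (forall k, (1 <= k <= t.+1)%N -> wat w k != None) (inner_ok w).
Proof.
apply: (iffP forallP) => ok k.
  by move=> hk; have /implyP := ok (inord k); rewrite inordK; [apply | lia].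
by apply/implyP => hk; have := ok k hk; rewrite /wat inord_val.
Qed.

Lemma wat_wv z0 w k : inner_ok w -> (1 <= k <= t.+1)%N -> wat w k = Some (wv z0 w k).
Proof. by move=> /inner_okP ok /ok; rewrite /wv; case: (wat w k). Qed.

Lemma marg_sum P j a : marg P j a = \sum_(w : W) (wat w j == a)%:R * P w.
Proof.
by rewrite /marg big_mkcond; apply: eq_bigr => w _; case: (_ == a); rewrite ?mul1r ?mul0r.
Qed.

Lemma joint_sum P i j b a :
  joint P i j b a = \sum_(w : W) ((wat w i == b) && (wat w j == a))%:R * P w.
Proof.
by rewrite /joint big_mkcond; apply: eq_bigr => w _; case: (_ && _); rewrite ?mul1r ?mul0r.
Qed.

Lemma sum_marg P j : \sum_a marg P j a = \sum_(w : W) P w.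
Proof. by rewrite [RHS](partition_big (fun w : W => wat w j) predT). Qed.

Definition rev_walk w : W := [ffun j => w (rev_ord j)].

Lemma rev_walkK : involutive rev_walk.
Proof. by move=> w; apply/ffunP => j; rewrite !ffunE rev_ordK. Qed.

Lemma wat_rev_walk w k : (k <= t.+2)%N -> wat (rev_walk w) k = wat w (t.+2 - k).
Proof. by move=> hk; rewrite /wat ffunE; congr (w _); apply/val_inj; rewrite /= !inordK; lia. Qed.

Lemma inner_ok_rev_walk w : inner_ok (rev_walk w) = inner_ok w.
Proof.
apply/inner_okP/inner_okP => ok k hk.
  by have := ok (t.+2 - k)%N; rewrite wat_rev_walk; [rewrite subKn; [apply; lia | lia] | lia].
by rewrite wat_rev_walk; [apply: ok; lia | lia].
Qed.

Lemma wv_rev_walk z0 w k : (k <= t.+2)%N -> wv z0 (rev_walk w) k = wv z0 w (t.+2 - k).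
Proof. by move=> hk; rewrite /wv wat_rev_walk. Qed.

Lemma marg_rev_walk P j : (j <= t.+2)%N ->
  marg (P \o rev_walk) j = marg P (t.+2 - j).
Proof.
move=> hj; apply: funext => a; rewrite !marg_sum (reindex_inj (inv_inj rev_walkK)) /=.
by apply: eq_bigr => w _; rewrite wat_rev_walk // rev_walkK.
Qed.

Lemma joint_rev_walk P i j : (i <= t.+2)%N -> (j <= t.+2)%N ->
  joint (P \o rev_walk) i j = joint P (t.+2 - i) (t.+2 - j).
Proof.
move=> hi hj; apply: funext => b; apply: funext => a.
rewrite !joint_sum (reindex_inj (inv_inj rev_walkK)) /=.
by apply: eq_bigr => w _; rewrite !wat_rev_walk // rev_walkK.
Qed.

Lemma condD_rev_walk P Q i j : (i <= t.+2)%N -> (j <= t.+2)%N ->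
  condD (P \o rev_walk) (Q \o rev_walk) i j = condD P Q (t.+2 - i) (t.+2 - j).
Proof. by move=> hi hj; rewrite /condD !marg_rev_walk // !joint_rev_walk. Qed.

Section PathSums.
Variable K : nat -> option Omega -> option Omega -> R.
Variables g top : option Omega -> R.

(* [backward m a]: [top] pulled back through the last [m] steps of [K], from state [a] at
   index [t.+2 - m]. *)
Fixpoint backward (m : nat) (a : option Omega) : R :=
  if m is m'.+1 then \sum_b K (t.+1 - m') a b * backward m' b else top a.

Lemma backward0 a : backward 0 a = top a.
Proof. by []. Qed.

Lemma backwardS m a :
  backward m.+1 a = \sum_b K (t.+1 - m) a b * backward m b.
Proof. by []. Qed.

Lemma backward_step k a : (1 <= k <= t.+1)%N ->
  backward (t.+2 - k) a = \sum_b K k a b * backward (t.+2 - k.+1) b.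
Proof.
move=> hk; rewrite (_ : t.+2 - k = (t.+1 - k).+1)%N ?backwardS; last by lia.
by rewrite (_ : t.+1 - (t.+1 - k) = k)%N; last by lia.
Qed.

Definition path_weight k w := \prod_(1 <= i < k) K i (wat w i) (wat w i.+1).
Definition none_after k w := [forall j : 'I_t.+3, (k < j)%N ==> (w j == None)].
Definition start_weight w := (wat w 0 == None)%:R * g (wat w 1).

Lemma none_afterS k w : (k.+1 <= t.+2)%N ->
  none_after k w = (w (inord k.+1) == None) && none_after k.+1 w.
Proof.
move=> kt; apply/forallP/andP => [after | [wk /forallP after] j].
  split; first by have /implyP := after (inord k.+1); rewrite inordK //; apply.
  by apply/forallP => j; apply/implyP => /ltnW; apply/implyP/after.
apply/implyP => hj; have [->|jk] := eqVneq j (inord k.+1) => //.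
apply: (implyP (after j)); rewrite ltn_neqAle hj andbT.
by apply/eqP => kj; move/eqP: jk; apply; apply/val_inj; rewrite /= inordK // kj.
Qed.

(* Summing out the coordinate k+1 of the walks that are [None] after it
   replaces one factor of the path weight by one step of [backward]. *)
Lemma sum_path_weight_step k : (1 <= k <= t.+1)%N ->
  \sum_(w : W) start_weight w * path_weight k.+1 w *
    backward (t.+2 - k.+1) (wat w k.+1) * (none_after k.+1 w)%:R =
  \sum_(w : W) start_weight w * path_weight k w *
    backward (t.+2 - k) (wat w k) * (none_after k w)%:R.
Proof.
move=> /andP[k1 kt]; have kt2 : (k.+1 <= t.+2)%N by []; have kt3 := ltnW kt2.
rewrite (sum_set_walk _ (inord k.+1) None).
rewrite [RHS](eq_bigr (fun w => if w (inord k.+1) == None then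
    start_weight w * path_weight k w * backward (t.+2 - k) (wat w k) *
    (none_after k.+1 w)%:R else 0)); last first.
  by move=> w _; rewrite none_afterS //; case: (_ == None); rewrite ?mulr0.
rewrite -big_mkcond; apply: eq_bigr => w _.
have start_set y : start_weight (set_walk w (inord k.+1) y) = start_weight w.
  by rewrite /start_weight !wat_set_walk // (_ : (1 == k.+1) = false) //; lia.
have weight_set y : path_weight k.+1 (set_walk w (inord k.+1) y) =
    path_weight k w * K k (wat w k) y.
  rewrite /path_weight big_nat_recr //= !wat_set_walk // ?eqxx ?(ltn_eqF (ltnSn k)) //.
  congr (_ * _); apply: eq_big_nat => i /andP[_ ik].
  by rewrite !wat_set_walk ?eqSS ?ltn_eqF //; lia.
have after_set y : none_after k.+1 (set_walk w (inord k.+1) y) = none_after k.+1 w.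
  apply: eq_forallb => j; rewrite /set_walk ffunE.
  case: (ltnP k.+1 j) => // hj /=; rewrite (_ : (j == inord k.+1) = false) //.
  by apply/negbTE; apply: contraTneq hj => ->; rewrite inordK // ltnn.
under eq_bigr => z _ do rewrite start_set weight_set after_set wat_set_walk // eqxx.
rewrite backward_step ?k1 // mulr_sumr mulr_suml.
by apply: eq_bigr => y _; ring.
Qed.

Lemma sum_start_weight (h : option Omega -> R) :
  \sum_(w : W) start_weight w * h (wat w 1) * (none_after 1 w)%:R = \sum_a g a * h a.
Proof.
rewrite (partition_big (fun w : W => wat w 1) predT) //=; apply: eq_bigr => a _.
pose wa : W := [ffun j => if j == inord 1 then a else None].
have only_wa w : wat w 1 = a -> ((wat w 0 == None) && none_after 1 w) = (w == wa).
  move=> w1; apply/andP/eqP => [[/eqP w0 /forallP after] | ->].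
    apply/ffunP => j; rewrite ffunE; case: eqP => [->|j1]; first by rewrite -w1.
    case: (ltnP 1 j) => [/(implyP (after j))/eqP // | hj].
    suff -> : j = inord 0 by [].
    apply/val_inj; rewrite /= inordK //; case: j j1 hj => [[|[|n]] jlt] //= j1 _.
    by case: j1; apply/val_inj; rewrite /= inordK.
  split; first by rewrite /wat ffunE inord_eq.
  apply/forallP => j; apply/implyP => hj; rewrite ffunE ifF //.
  by apply/negbTE; apply: contraTneq hj => ->; rewrite inordK.
rewrite (eq_bigr (fun w => (w == wa)%:R * (g a * h a))) => [|w /eqP w1]; last first.
  rewrite -(only_wa w w1) /start_weight w1.
  by case: (_ == None); case: (none_after 1 w); rewrite /= ?mulr0 ?mul0r ?mulr1 ?mul1r.
rewrite -mulr_suml (bigD1 wa) /=; last by rewrite /wat ffunE eqxx.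
by rewrite eqxx big1 ?addr0 ?mul1r // => w /andP[_ /negbTE ->].
Qed.

Lemma sum_path_weight :
  \sum_(w : W) start_weight w * path_weight t.+2 w * top (wat w t.+2) =
  \sum_a g a * backward t.+1 a.
Proof.
have peel m : (m <= t.+1)%N ->
    \sum_(w : W) start_weight w * path_weight m.+1 w *
      backward (t.+2 - m.+1) (wat w m.+1) * (none_after m.+1 w)%:R =
    \sum_(w : W) start_weight w * backward t.+1 (wat w 1) * (none_after 1 w)%:R.
  elim: m => [_|m IH hm]; first by apply: eq_bigr => w _; rewrite /path_weight big_geq ?mulr1.
  by rewrite sum_path_weight_step ?IH ?(ltnW hm) //; apply/andP.
rewrite -sum_start_weight -(peel t.+1 (leqnn _)) subnn.
apply: eq_bigr => w _; rewrite (_ : none_after t.+2 w) ?mulr1 //.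
by apply/forallP => j; apply/implyP => hj; have := ltn_ord j; lia.
Qed.

End PathSums.
End Walks.

Arguments backward : simpl never.
Arguments rev_walk {Omega t} w.

Section MatrixPowers.
Variables (R : realType) (Omega : finType) (S : Omega -> Omega -> R).

Lemma SpowS m x z : Spow S m.+1 x z = \sum_y Spow S m x y * S y z.
Proof. by []. Qed.

Lemma Spow_left m x z : Spow S m.+1 x z = \sum_y S x y * Spow S m y z.
Proof.
elim: m x z => [|m IH] x z.
  by rewrite SpowS /= sum_delta; under eq_bigr do rewrite mulrC eq_sym; rewrite sum_delta.
rewrite SpowS; under eq_bigr do rewrite IH mulr_suml.
rewrite exchange_big; apply: eq_bigr => y _.
by rewrite SpowS mulr_sumr; apply: eq_bigr => z' _; rewrite mulrA.
Qed.

Hypothesis S_sym : forall x y, S x y = S y x.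

Lemma Spow_sym m x y : Spow S m x y = Spow S m y x.
Proof.
elim: m x y => [|m IH] x y; first by rewrite /= eq_sym.
by rewrite SpowS Spow_left; apply: eq_bigr => z _; rewrite IH S_sym mulrC.
Qed.

Lemma Sbil_sym t mu nu : Sbil S t mu nu = Sbil S t nu mu.
Proof.
rewrite /Sbil exchange_big; apply: eq_bigr => x _.
by apply: eq_bigr => y _; rewrite Spow_sym; ring.
Qed.

End MatrixPowers.

Section ForwardWalk.
Variables (R : realType) (Omega : finType) (t : nat).
Variables (S : Omega -> Omega -> R) (mu nu : Omega -> R) (z0 : Omega).
Local Notation W := (walk Omega t).

Definition exit_weight (f : Omega -> R) (x : Omega) (a : option Omega) : R :=
  if a == None then f x else if a == Some z0 then 1 - f x else 0.

Lemma sum_exit_weight f x : \sum_a exit_weight f x a = 1.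
Proof.
rewrite big_option /exit_weight eqxx /= (bigD1 z0) //= eqxx big1 => [|y /negbTE yz0].
  by rewrite addr0 addrC subrK.
by rewrite ifF //; apply/eqP => -[/eqP]; rewrite yz0.
Qed.

(* Step i of F^t goes from index i to index i+1: a step of S for i <= t, then the exit
   to r or to z0. *)
Definition forward_kernel (i : nat) (a b : option Omega) : R :=
  if (i <= t)%N then (if (a, b) is (Some x, Some y) then S x y else 0)
  else if a is Some x then exit_weight nu x b else 0.

Lemma PF_path (w : W) : PF S mu nu z0 w =
  start_weight (oapp mu 0) w * path_weight forward_kernel t.+2 w.
Proof.
rewrite /PF /start_weight; case: (wat w 0 == None) => /=; last by rewrite !mul0r.
rewrite mul1r; case ok: (inner_ok w) => /=.
  rewrite [wat w 1](wat_wv z0 ok) //= /path_weight [X in _ = _ * X]big_nat_recr //= -mulrA.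
  congr (_ * (_ * _)).
    apply: eq_big_nat => i /andP[i1 it].
    by rewrite /forward_kernel ifT ?(wat_wv z0 ok) //; lia.
  by rewrite /forward_kernel ltnn [wat w t.+1](wat_wv z0 ok) //; lia.
have [k hk wk] : exists2 k, (1 <= k <= t.+1)%N & wat w k = None.
  move/negbT: ok; rewrite negb_forall => /existsP [j].
  rewrite negb_imply => /andP[hj /negPn /eqP wj].
  by exists (val j) => //; rewrite /wat inord_val.
apply/esym/eqP; rewrite mulf_eq0 prodf_seq_eq0; apply/orP; right.
apply/hasP; exists k; first by rewrite mem_index_iota; lia.
by rewrite /= wk /forward_kernel; case: (k <= t)%N.
Qed.

Lemma sum_PF_end (top : option Omega -> R) :
  \sum_(w : W) PF S mu nu z0 w * top (wat w t.+2) =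
  \sum_a oapp mu 0 a * backward t forward_kernel top t.+1 a.
Proof. by rewrite -sum_path_weight; apply: eq_bigr => w _; rewrite PF_path. Qed.

Lemma backward_absorbed m : (m <= t)%N -> forall a,
  backward t forward_kernel (fun b => (b == None)%:R) m.+1 a =
  oapp (fun x => \sum_y Spow S m x y * nu y) 0 a.
Proof.
elim: m => [_|m IH hm] a; rewrite backwardS big_option.
  have last_step b c : forward_kernel (t.+1 - 0) b c =
      if b is Some x then exit_weight nu x c else 0.
    by rewrite /forward_kernel subn0 ltnn.
  rewrite last_step backward0; under eq_bigr do rewrite last_step backward0.
  case: a => [x|] /=; last by rewrite mul0r add0r big1 // => y _; rewrite mul0r.
  by rewrite mulr1 big1 ?addr0 ?sum_delta // => y _; rewrite mulr0.
rewrite IH ?(ltnW hm) // mulr0 add0r; under eq_bigr do rewrite IH ?(ltnW hm) //.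
have inner_step b c : forward_kernel (t.+1 - m.+1) b c =
    if (b, c) is (Some x, Some y) then S x y else 0.
  by rewrite /forward_kernel ifT //; lia.
under eq_bigr do rewrite inner_step.
case: a => [x|] /=; last by rewrite big1 // => y _; rewrite mul0r.
under [RHS]eq_bigr do rewrite -SpowS Spow_left mulr_suml.
rewrite exchange_big; apply: eq_bigr => y _ /=.
by rewrite mulr_sumr; apply: eq_bigr => z _; rewrite mulrA.
Qed.

Lemma sum_PF_absorbed :
  \sum_(w : W) PF S mu nu z0 w * (wat w t.+2 == None)%:R = Sbil S t mu nu.
Proof.
rewrite (sum_PF_end (fun b => (b == None)%:R)) big_option mul0r add0r.
under eq_bigr do rewrite backward_absorbed //.
by rewrite /Sbil; apply: eq_bigr => x _; rewrite mulr_sumr; apply: eq_bigr => y _; rewrite mulrA.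
Qed.

Hypothesis S_ge0 : forall x y, 0 <= S x y.
Hypothesis S_substochastic : forall x, \sum_y S x y <= 1.
Hypothesis mu_ge0 : forall x, 0 <= mu x.
Hypothesis nu_ge0 : forall x, 0 <= nu x.
Hypothesis nu_le1 : forall x, nu x <= 1.

Lemma forward_kernel_ge0 i a b : 0 <= forward_kernel i a b.
Proof.
rewrite /forward_kernel /exit_weight.
by case: ifP => _; case: a => [x|]; case: b => [y|] //=; case: ifP; rewrite ?subr_ge0.
Qed.

Lemma sum_forward_kernel_le1 i a : \sum_b forward_kernel i a b <= 1.
Proof.
rewrite /forward_kernel; case: (i <= t)%N; case: a => [x|] /=;
  rewrite ?sum_exit_weight ?big1_eq ?ler01 //.
by rewrite big_option add0r.
Qed.

Lemma backward_survival_bound m a :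
  0 <= backward t forward_kernel (fun=> 1) m a <= 1.
Proof.
elim: m a => [|m IH] a; first by rewrite backward0 ler01 lexx.
rewrite backwardS; apply/andP; split.
  by apply: sumr_ge0 => b _; rewrite mulr_ge0 ?forward_kernel_ge0 //; case/andP: (IH b).
apply: le_trans (sum_forward_kernel_le1 (t.+1 - m) a); apply: ler_sum => b _.
by rewrite ler_piMr ?forward_kernel_ge0 //; case/andP: (IH b).
Qed.

Lemma PF_ge0 (w : W) : 0 <= PF S mu nu z0 w.
Proof.
rewrite PF_path mulr_ge0 ?prodr_ge0 // => [|i _]; last exact: forward_kernel_ge0.
by rewrite mulr_ge0 ?ler0n //; case: (wat w 1) => /=.
Qed.

Lemma marg_PF_start_le x : marg (PF S mu nu z0 (t:=t)) 1 (Some x) <= mu x.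
Proof.
pose g a := (a == Some x)%:R * oapp mu 0 a.
have -> : marg (PF S mu nu z0 (t:=t)) 1 (Some x) =
    \sum_(w : W) start_weight g w * path_weight forward_kernel t.+2 w * 1.
  by rewrite marg_sum; apply: eq_bigr => w _; rewrite PF_path /start_weight /g; ring.
rewrite (sum_path_weight _ _ g (fun=> 1)).
under eq_bigr do rewrite /g [_ == _]eq_sym -mulrA.
by rewrite sum_delta /= ler_piMr //; case/andP: (backward_survival_bound t.+1 (Some x)).
Qed.

End ForwardWalk.

Section Reversal.
Variables (R : realType) (Omega : finType) (t : nat).
Variables (S : Omega -> Omega -> R) (z0 : Omega).
Local Notation W := (walk Omega t).

Lemma PB_rev_walk (mu nu : Omega -> R) :
  PB S mu nu z0 (t:=t) = PF S nu mu z0 (t:=t) \o rev_walk.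
Proof.
apply: funext => w /=.
rewrite /PB /PF inner_ok_rev_walk !wat_rev_walk // subn0 subnn !wv_rev_walk //.
rewrite (_ : t.+2 - 1 = t.+1)%N ?subSnn; last by lia.
case: (_ && _) => //; congr (_ * _ * _).
rewrite big_nat_rev /=; apply: eq_big_nat => i /andP[i1 it].
by rewrite !wv_rev_walk; [congr (S (wv z0 w _) (wv z0 w _)) | ..]; lia.
Qed.

Lemma PF_rev_walk (mu nu : Omega -> R) :
  PF S mu nu z0 (t:=t) = PB S nu mu z0 (t:=t) \o rev_walk.
Proof. by rewrite PB_rev_walk; apply: funext => w /=; rewrite rev_walkK. Qed.

Lemma PF_eq0 (mu nu : Omega -> R) (w : W) : wat w 0 != None -> PF S mu nu z0 w = 0.
Proof. by rewrite /PF => /negbTE ->. Qed.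

Lemma PB_eq0 (mu nu : Omega -> R) (w : W) : wat w t.+2 != None -> PB S mu nu z0 w = 0.
Proof. by rewrite /PB => /negbTE ->. Qed.

Hypothesis S_sym : forall x y, S x y = S y x.

Lemma PF_eq_PB (mu nu : Omega -> R) (w : W) : wat w 0 = None -> wat w t.+2 = None ->
  PF S mu nu z0 w = PB S mu nu z0 w.
Proof.
move=> w0 w2; rewrite /PF /PB w0 w2 /=; case: (inner_ok w) => //.
by under eq_bigr do rewrite S_sym; ring.
Qed.

Lemma PX_rev_walk (mu nu : Omega -> R) :
  PX S mu nu z0 (t:=t) = PX S nu mu z0 (t:=t) \o rev_walk.
Proof.
apply: funext => w; rewrite /PX /= wat_rev_walk // subnn -Sbil_sym //.
have -> : PF S nu mu z0 (rev_walk w) = PB S mu nu z0 w by rewrite PB_rev_walk.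
have [w0|w0] := eqVneq (wat w 0) None; have [w2|w2] := eqVneq (wat w t.+2) None.
- by rewrite PF_eq_PB.
- by rewrite PB_eq0 ?mul0r.
- by rewrite PF_eq0 ?mul0r.
- by [].
Qed.

End Reversal.

Section StartStep.
Variables (R : realType) (Omega : finType) (t : nat).
Variables (S : Omega -> Omega -> R) (mu nu : Omega -> R) (z0 : Omega).
Hypothesis S_ge0 : forall x y, 0 <= S x y.
Hypothesis S_sym : forall x y, S x y = S y x.
Hypothesis S_substochastic : forall x, \sum_y S x y <= 1.
Hypothesis mu_ge0 : forall x, 0 <= mu x.
Hypothesis nu_ge0 : forall x, 0 <= nu x.
Hypothesis nu_le1 : forall x, nu x <= 1.
Local Notation W := (walk Omega t).
Local Notation Z := (Sbil S t mu nu).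
Local Notation PFw := (PF S mu nu z0 (t:=t)).
Local Notation PBw := (PB S mu nu z0 (t:=t)).
Local Notation PXw := (PX S mu nu z0 (t:=t)).
Hypothesis Z_gt0 : 0 < Z.

Lemma PXE (w : W) : PXw w = (wat w t.+2 == None)%:R * PFw w / Z.
Proof. by rewrite /PX; case: ifP; rewrite ?mul1r ?mul0r. Qed.

Lemma PX_ge0 (w : W) : 0 <= PXw w.
Proof. by rewrite PXE divr_ge0 ?mulr_ge0 ?ler0n ?(ltW Z_gt0) //; apply: PF_ge0. Qed.

Lemma sum_PX : \sum_(w : W) PXw w = 1.
Proof.
under eq_bigr do rewrite PXE mulrC [_%:R * _]mulrC.
by rewrite -mulr_sumr sum_PF_absorbed mulVf // gt_eqF.
Qed.

Lemma marg_PX_start_None : marg PXw 1 None = 0.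
Proof.
rewrite /marg big1 // => w /eqP w1; rewrite PXE /PF.
by case: (inner_okP w) => [/(_ 1%N isT)|]; rewrite ?w1 ?andbF ?mulr0 ?mul0r.
Qed.

Lemma joint_PX_start b a : joint PXw 0 1 b a = (b == None)%:R * marg PXw 1 a.
Proof.
rewrite joint_sum marg_sum mulr_sumr; apply: eq_bigr => w _.
have [w0|w0] := eqVneq (wat w 0) None; last by rewrite PXE PF_eq0 // !(mulr0, mul0r).
by rewrite w0 eq_sym; case: (b == None); case: (wat w 1 == a); rewrite /= ?mul1r ?mul0r.
Qed.

Lemma joint_PB_start a : joint PBw 0 1 None a = Z * marg PXw 1 a.
Proof.
rewrite joint_sum marg_sum mulr_sumr; apply: eq_bigr => w _.
have [w0|w0] := eqVneq (wat w 0) None; last by rewrite PXE PF_eq0 //= !(mulr0, mul0r).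
have [w2|w2] := eqVneq (wat w t.+2) None.
  by rewrite PXE w2 PF_eq_PB //= mul1r mulrCA [Z * _]mulrC divfK ?gt_eqF.
by rewrite PXE (negbTE w2) PB_eq0 //= !(mulr0, mul0r).
Qed.

Definition PB_body (w : W) : R :=
  if (wat w t.+2 == None) && inner_ok w then
    nu (wv z0 w t.+1) * \prod_(1 <= i < t.+1) S (wv z0 w i.+1) (wv z0 w i)
  else 0.

Lemma PBE (w : W) : PBw w = PB_body w * exit_weight z0 mu (wv z0 w 1) (wat w 0).
Proof. by rewrite /PB /PB_body; case: ifP; rewrite ?mul0r. Qed.

Lemma PB_body_set_start (w : W) y : PB_body (set_walk w (inord 0) y) = PB_body w.
Proof.
have set_wv k : (0 < k <= t.+2)%N -> wv z0 (set_walk w (inord 0) y) k = wv z0 w k.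
  by move=> hk; rewrite /wv wat_set_walk //; [rewrite ifF //; lia | lia].
have set_inner : inner_ok (set_walk w (inord 0) y) = inner_ok w.
  apply/inner_okP/inner_okP => ok k hk; move: (ok k hk);
    by rewrite wat_set_walk ?ifF //; lia.
rewrite /PB_body set_inner wat_set_walk // [wv _ _ t.+1]set_wv; last by lia.
congr (if _ then _ * _ else _); apply: eq_big_nat => i /andP[i1 it].
by rewrite !set_wv //; lia.
Qed.

Lemma joint_PB_start_exit x : joint PBw 0 1 None (Some x) = mu x * marg PBw 1 (Some x).
Proof.
rewrite joint_sum marg_sum mulr_sumr !(sum_set_walk _ (inord 0) None).
apply: eq_bigr => w _.
under eq_bigr do rewrite PBE PB_body_set_start /wv !wat_set_walk //=.
under [RHS]eq_bigr do rewrite PBE PB_body_set_start /wv !wat_set_walk //=.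
have [->|w1] /= := eqVneq (wat w 1) (Some x); last first.
  by rewrite !big1 // => y _; rewrite ?andbF /= !mul0r ?mulr0.
under eq_bigr do rewrite andbT eq_sym.
under [RHS]eq_bigr do rewrite mul1r.
by rewrite sum_delta -!mulr_sumr sum_exit_weight /exit_weight eqxx mulr1 mulrC.
Qed.

Lemma marg_PX_start_le a : Z * marg PXw 1 a <= marg PFw 1 a.
Proof.
rewrite !marg_sum mulr_sumr; apply: ler_sum => w _.
rewrite PXE mulrCA [Z * _]mulrC divfK ?gt_eqF // ler_wpM2l ?ler0n //.
by rewrite ler_piMl ?lern1 ?leq_b1 //; apply: PF_ge0.
Qed.

Lemma start_support a : 0 < marg PXw 1 a ->
  exists2 x, a = Some x & 0 < mu x /\ marg PBw 1 (Some x) != 0.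
Proof.
case: a => [x|] pa; last by rewrite marg_PX_start_None ltxx in pa.
have prod_gt0 : 0 < mu x * marg PBw 1 (Some x).
  by rewrite -joint_PB_start_exit joint_PB_start mulr_gt0.
exists x => //; split; last by apply: contraTneq prod_gt0 => ->; rewrite mulr0 ltxx.
by rewrite lt_def mu_ge0 andbT; apply: contraTneq prod_gt0 => ->; rewrite mul0r ltxx.
Qed.

Lemma condD_start : condD PXw PBw 0 1 =
  (\sum_(a | 0 < marg PXw 1 a) marg PXw 1 a * - log2 (oapp mu 0 a))%:E.
Proof.
rewrite /condD -sumEFin; apply: eq_bigr => a pa.
have [x ax [mux mB]] := start_support pa; subst a.
have -> : (fun b => joint PXw 0 1 b (Some x) / marg PXw 1 (Some x)) =
    (fun b => (b == None)%:R).
  by apply: funext => b; rewrite joint_PX_start mulrK // unitfE gt_eqF.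
have ratio : joint PBw 0 1 None (Some x) / marg PBw 1 (Some x) = mu x.
  by rewrite joint_PB_start_exit mulrK ?unitfE.
by rewrite Dkl_indicator /= ratio // -EFinM.
Qed.

Lemma start_divergence_ge :
  ((- log2 (\sum_x mu x ^+ 2))%:E <=
    Dkl (marg PXw 1) (marg PFw 1) + condD PXw PBw 0 1)%E.
Proof.
set p := marg PXw 1; set q := marg PFw 1; pose m := oapp mu 0.
have p_ge0 a : 0 <= p a by apply: sumr_ge0 => w _; apply: PX_ge0.
have p_sum1 : \sum_a p a = 1 by rewrite sum_marg sum_PX.
have supp a : 0 < p a -> 0 < q a /\ 0 < m a.
  move=> pa; split; first by apply: lt_le_trans (marg_PX_start_le a); rewrite mulr_gt0.
  by have [x -> []] := start_support pa.
rewrite condD_start DklE => [|a /supp[] //]; rewrite -EFinD -big_split lee_fin /=.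
have -> : \sum_(a | 0 < p a) (p a * log2 (p a / q a) + p a * - log2 (m a)) =
    \sum_(a | 0 < p a) p a * log2 (p a / (q a * m a)).
  apply: eq_bigr => a pa; have [qa ma] := supp a pa.
  by rewrite (log2_div pa qa) (log2_div pa (mulr_gt0 qa ma)) (log2M qa ma); ring.
apply: le_trans (gibbs p_ge0 p_sum1 _) => [|a /supp[qa ma]]; last exact: mulr_gt0.
have qm_ge0 a : 0 <= q a * m a.
  by rewrite mulr_ge0 //; [apply: sumr_ge0 => w _; apply: PF_ge0 | case: a].
have [a0 pa0] := sum_eq1_exists_gt0 p_sum1.
have qm_gt0 : 0 < \sum_(a | 0 < p a) q a * m a.
  rewrite (bigD1 a0) //= ltr_pwDl ?sumr_ge0 //.
  by have [qa ma] := supp a0 pa0; rewrite mulr_gt0.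
rewrite lerN2 ler_log2 // (le_trans (_ : _ <= \sum_a q a * m a)) //.
  by rewrite [leRHS](bigID (fun a => 0 < p a)) /= lerDl sumr_ge0.
rewrite big_option /= mulr0 add0r; apply: ler_sum => x _.
by rewrite expr2 ler_wpM2r ?marg_PF_start_le.
Qed.

End StartStep.

Lemma l1normalize_in01 (R : realType) (Omega : finType) (u : Omega -> R) x :
  (forall y, 0 <= u y) -> 0 <= l1normalize u x <= 1.
Proof.
move=> u_ge0; rewrite /l1normalize.
have [->|norm_neq0] := eqVneq (\sum_y `|u y|) 0; first by rewrite invr0 mulr0 lexx ler01.
have norm_gt0 : 0 < \sum_y `|u y| by rewrite lt_def norm_neq0 sumr_ge0.
apply/andP; split; first by rewrite divr_ge0 // ltW.
rewrite ler_pdivrMr // mul1r.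
by rewrite (bigD1 x) //= ger0_norm // lerDl sumr_ge0.
Qed.

Local Open Scope ereal_scope.

Theorem lemma3p6 (R : realType) (Omega : finType)
  (S : Omega -> Omega -> R) (u v : Omega -> R) (z0 : Omega) (t : nat) :
  (0 < t)%N ->
  (forall x y, (0 <= S x y)%R) ->
  (forall x y, S x y = S y x) ->
  (forall x, (\sum_(y : Omega) S x y <= 1)%R) ->
  (forall x, (0 <= u x)%R) -> (forall x, (0 <= v x)%R) ->
  (Num.sqrt (\sum_(x : Omega) u x ^+ 2) = 1)%R ->
  (Num.sqrt (\sum_(x : Omega) v x ^+ 2) = 1)%R ->
  let mu := l1normalize u in
  let nu := l1normalize v in
  (0 < Sbil S t mu nu)%R ->
  ((Dkl (marg (PX S mu nu z0 (t:=t)) 1) (marg (PF S mu nu z0 (t:=t)) 1)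
     + condD (PX S mu nu z0 (t:=t)) (PB S mu nu z0 (t:=t)) 0 1
    >= ((- log2 (Num.sqrt (\sum_(x : Omega) mu x ^+ 2) ^+ 2))%R)%:E)
  /\
  (Dkl (marg (PX S mu nu z0 (t:=t)) t.+1) (marg (PB S mu nu z0 (t:=t)) t.+1)
     + condD (PX S mu nu z0 (t:=t)) (PF S mu nu z0 (t:=t)) t.+2 t.+1
    >= ((- log2 (Num.sqrt (\sum_(x : Omega) nu x ^+ 2) ^+ 2))%R)%:E)).
Proof.
move=> _ S_ge0 S_sym S_sub u_ge0 v_ge0 _ _ mu nu Z_gt0.
have [mu_ge0 mu_le1] : (forall x, 0 <= mu x)%R /\ (forall x, mu x <= 1)%R.
  by split=> x; case/andP: (l1normalize_in01 x u_ge0).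
have [nu_ge0 nu_le1] : (forall x, 0 <= nu x)%R /\ (forall x, nu x <= 1)%R.
  by split=> x; case/andP: (l1normalize_in01 x v_ge0).
rewrite !sqr_sqrtr ?sumr_ge0 // => [|x _|x _]; rewrite ?sqr_ge0 //.
split; first exact: start_divergence_ge.
rewrite (PX_rev_walk t z0 S_sym mu nu) (PF_rev_walk t S z0 mu nu) (PB_rev_walk t S z0 mu nu).
rewrite condD_rev_walk // !marg_rev_walk // subnn (_ : t.+2 - t.+1 = 1)%N; last by lia.
by apply: start_divergence_ge; rewrite // Sbil_sym.
Qed.
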